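(* Let $C>0$, let $\mathcal F$ satisfy realizability, and suppose the event holds that $\sum_{t=\tau_1}^{\tau_2}\mathbb E_t[M_t(f)]\le2\sum_{t=\tau_1}^{\tau_2}M_t(f)+C$ for all $f\in\mathcal F$ and $1\le\tau_1\le\tau_2\le T$. Then for all $2\le k\le m\le M$: (1) $f^\star\in\hat{\mathcal F}_m\big(\frac{C}{2(\tau_m-1)}\big)$; (2) for all $\beta\ge0$, $\hat{\mathcal F}_m(\beta)\subseteq\tilde{\mathcal F}_m\big(2\beta+\frac{C}{\tau_m-1}\big)$; moreover, if the actions are generated by Algorithm 1 with Option II or by Algorithm 2, then $\mathbb E_{\tau_{m-1}}[M_{\tau_{m-1}}(f)]\le\frac{2\beta(\tau_m-1)+C}{T_{m-1}}$ for every $f\in\hat{\mathcal F}_m(\beta)$; (3) for all $\beta\ge0$, $\hat{\mathcal F}_m(\beta)\subseteq\hat{\mathcal F}_k\big(\frac{\tau_m-1}{\tau_k-1}\beta+\frac{C}{\tau_k-1}\big)$; (4) with $\beta_m=\frac{(M-m+1)C}{\tau_m-1}$ and $\mathcal F_m=\hat{\mathcal F}_m(\beta_m)$ for $m\ge2$, $\mathcal F_1=\mathcal F$: $f^\star\in\mathcal F_m$ for all $m$, and $\mathcal F_m\subseteq\mathcal F_{m-1}\subseteq\dots\subseteq\mathcal F_1$.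
   Context: Setting: $\mathcal A=\{1,\dots,K\}$, $D$ a distribution over $(x,r)\in\mathcal X\times[0,1]^K$; in rounds $t=1,\dots,T$, $(x_t,r_t)\sim D$ independently of the past, $a_t$ is chosen from $x_t$, past observations and independent randomness, and only $r_t(a_t)$ is observed. $\mathcal F$ is a class of functions $\mathcal X\times\mathcal A\to[0,1]$; realizability: $f^\star\in\mathcal F$ where $f^\star(x,a)=\mathbb E[r(a)\mid x]$. $\mathcal J_t=\sigma((x_s,a_s,r_s)_{s<t})$, $\mathbb E_t=\mathbb E[\cdot\mid\mathcal J_t]$; $M_t(f)=(f(x_t,a_t)-r_t(a_t))^2-(f^\star(x_t,a_t)-r_t(a_t))^2$. Epochs: epoch $m$ is rounds $\tau_m,\dots,\tau_{m+1}-1$ with $\tau_m=2^{m-1}$, length $T_m=2^{m-1}$; $M$ is the epoch containing $T$. For $m\ge2$: $\hat R_m(f)=\frac1{\tau_m-1}\sum_{s<\tau_m}(f(x_s,a_s)-r_s(a_s))^2$, $\hat{\mathcal F}_m(\beta)=\{f\in\mathcal F:\hat R_m(f)-\min_{f'}\hat R_m(f')\le\beta\}$ (minimum attained), $\tilde{\mathcal F}_m(\beta)=\{f\in\mathcal F:\frac1{\tau_m-1}\sum_{t=1}^{\tau_m-1}\mathbb E_t[M_t(f)]\le\beta\}$; $\hat{\mathcal F}_1(\beta)=\mathcal F$. $\mathrm{High}_{\mathcal F'}(x,a)=\max_{f\in\mathcal F'}f(x,a)$, $\mathrm{Low}_{\mathcal F'}(x,a)=\min_{f\in\mathcal F'}f(x,a)$.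 Algorithm 1 with Option II (tolerances $\beta_m$): in epoch $m$, $\mathcal F_m=\hat{\mathcal F}_m(\beta_m)$, and at each round $t$ of epoch $m$, $a_t\sim\mathrm{Unif}(A_t)$ with $A_t=\{a:\mathrm{High}_{\mathcal F_m}(x_t,a)\ge\max_{a'}\mathrm{Low}_{\mathcal F_m}(x_t,a')\}$. Algorithm 2 (warm start $M_0$): uniform actions for $t<\tau_{M_0}$; in epochs $m\ge M_0$, $\mathcal F_m=\hat{\mathcal F}_m(\beta_m)$ and $a_t\in\arg\max_a\mathrm{High}_{\mathcal F_m}(x_t,a)$. *)

From HB Require Import structures.
From mathcomp Require Import all_boot all_order all_algebra.
Set Implicit Arguments. Unset Strict Implicit. Unset Printing Implicit Defensive.
Import Order.TTheory GRing.Theory Num.Theory.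
Local Open Scope ring_scope.

(* tau m = 2^(m-1) : first round of epoch m;  Tlen m = 2^(m-1) : length of epoch m *)
Definition tau (m : nat) : nat := (2 ^ m.-1)%N.
Definition Tlen (m : nat) : nat := (2 ^ m.-1)%N.

Definition bounded_on (T : Type) (R : realFieldType) (S : T -> Prop) (h : T -> R) : Prop :=
  exists B : R, forall t, S t -> `|h t| <= B.

(* E is the expectation operator of a probability distribution supported on S,
   acting on (real valued) functions bounded on S. *)
Definition is_expect_on (T : Type) (R : realFieldType) (S : T -> Prop) (E : (T -> R) -> R) : Prop :=
  [/\ (forall h g, bounded_on S h -> bounded_on S g -> E (fun t => h t + g t) = E h + E g),
      (forall (c : R) h, bounded_on S h -> E (fun t => c * h t) = c * E h),
      (forall h g, bounded_on S h -> bounded_on S g -> (forall t, S t -> h t <= g t) -> E h <= E g)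
    & E (fun _ => 1) = 1].

Definition unit_cube (R : realFieldType) (K : nat) (rr : 'I_K -> R) : Prop :=
  forall b, 0 <= rr b <= 1.

Definition sqloss (R : realFieldType) (X : Type) (K : nat)
  (f : X -> 'I_K -> R) (z : X) (b : 'I_K) (rr : 'I_K -> R) : R := (f z b - rr b) ^+ 2.

Definition Mt (R : realFieldType) (X : Type) (K : nat) (fstar : X -> 'I_K -> R)
  (x : nat -> X) (a : nat -> 'I_K) (r : nat -> 'I_K -> R) (f : X -> 'I_K -> R) (t : nat) : R :=
  sqloss f (x t) (a t) (r t) - sqloss fstar (x t) (a t) (r t).

(* E_t[M_t(f)]: (x_t,r_t) ~ D (marginal EX on contexts, conditional ER z on reward
   vectors given context z), a_t ~ pol t x_t (the conditional law of a_t given the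
   history J_t and x_t), a_t independent of r_t given (J_t, x_t). *)
Definition Et (R : realFieldType) (X : Type) (K : nat) (EX : (X -> R) -> R)
  (ER : X -> (('I_K -> R) -> R) -> R) (pol : nat -> X -> 'I_K -> R)
  (fstar : X -> 'I_K -> R) (f : X -> 'I_K -> R) (t : nat) : R :=
  EX (fun z => \sum_(b < K) pol t z b *
                 ER z (fun rr => sqloss f z b rr - sqloss fstar z b rr)).

Definition Rhat (R : realFieldType) (X : Type) (K : nat)
  (x : nat -> X) (a : nat -> 'I_K) (r : nat -> 'I_K -> R) (m : nat) (f : X -> 'I_K -> R) : R :=
  ((tau m - 1)%:R)^-1 * \sum_(1 <= s < tau m) sqloss f (x s) (a s) (r s).

(* \hat F_m(beta); \hat F_1(beta) = F.  "Rhat f - min Rhat <= beta" written as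
   "Rhat f - Rhat f' <= beta for every f' in F" (the minimum being attained). *)
Definition Fhat (R : realFieldType) (X : Type) (K : nat) (F : (X -> 'I_K -> R) -> Prop)
  (x : nat -> X) (a : nat -> 'I_K) (r : nat -> 'I_K -> R) (m : nat) (beta : R)
  (f : X -> 'I_K -> R) : Prop :=
  F f /\ ((2 <= m)%N -> forall f', F f' -> Rhat x a r m f - Rhat x a r m f' <= beta).

Definition Ftilde (R : realFieldType) (X : Type) (K : nat) (F : (X -> 'I_K -> R) -> Prop)
  (EX : (X -> R) -> R) (ER : X -> (('I_K -> R) -> R) -> R) (pol : nat -> X -> 'I_K -> R)
  (fstar : X -> 'I_K -> R) (m : nat) (beta : R) (f : X -> 'I_K -> R) : Prop :=
  F f /\ ((tau m - 1)%:R)^-1 * \sum_(1 <= t < tau m) Et EX ER pol fstar f t <= beta.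

Definition is_High (R : realFieldType) (X : Type) (K : nat)
  (G : (X -> 'I_K -> R) -> Prop) (hi : X -> 'I_K -> R) : Prop :=
  forall z b, (exists f, G f /\ f z b = hi z b) /\ (forall f, G f -> f z b <= hi z b).
Definition is_Low (R : realFieldType) (X : Type) (K : nat)
  (G : (X -> 'I_K -> R) -> Prop) (lo : X -> 'I_K -> R) : Prop :=
  forall z b, (exists f, G f /\ f z b = lo z b) /\ (forall f, G f -> lo z b <= f z b).

Definition Aset (R : realFieldType) (X : Type) (K : nat)
  (hi lo : X -> 'I_K -> R) (z : X) : {set 'I_K} :=
  [set b : 'I_K | [forall b' : 'I_K, lo z b' <= hi z b]].

(* The conditional action distributions pol are those of Algorithm 1 with
   Option II run with tolerances betas:  F_m = \hat F_m(betas m) (F_1 = F), and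
   in every round t of epoch m, a_t ~ Unif(A_t). *)
Definition alg1_opt2 (R : realFieldType) (X : Type) (K : nat) (F : (X -> 'I_K -> R) -> Prop)
  (x : nat -> X) (a : nat -> 'I_K) (r : nat -> 'I_K -> R) (betas : nat -> R)
  (pol : nat -> X -> 'I_K -> R) : Prop :=
  exists hi lo : nat -> X -> 'I_K -> R,
    [/\ (forall m, (1 <= m)%N -> is_High (Fhat F x a r m (betas m)) (hi m)),
        (forall m, (1 <= m)%N -> is_Low (Fhat F x a r m (betas m)) (lo m))
      & (forall m t, (1 <= m)%N -> (tau m <= t < tau m.+1)%N -> forall z b,
           pol t z b = if b \in Aset (hi m) (lo m) z
                       then (#|Aset (hi m) (lo m) z|%:R)^-1 else 0)].

(* Algorithm 2 with warm start M0 and tolerances betas: uniform actions for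
   t < tau M0; in epochs m >= M0, a_t = sel m x_t, an action maximizing
   High_{F_m}(x_t, .) (sel is the fixed tie-breaking rule of epoch m). *)
Definition alg2 (R : realFieldType) (X : Type) (K : nat) (F : (X -> 'I_K -> R) -> Prop)
  (x : nat -> X) (a : nat -> 'I_K) (r : nat -> 'I_K -> R) (betas : nat -> R)
  (pol : nat -> X -> 'I_K -> R) : Prop :=
  exists (M0 : nat) (hi : nat -> X -> 'I_K -> R) (sel : nat -> X -> 'I_K),
    [/\ (1 <= M0)%N,
        (forall m, (M0 <= m)%N -> is_High (Fhat F x a r m (betas m)) (hi m)),
        (forall m z b, (M0 <= m)%N -> hi m z b <= hi m z (sel m z)),
        (forall t, (1 <= t < tau M0)%N -> forall z b, pol t z b = (K%:R)^-1)
      & (forall m t, (M0 <= m)%N -> (tau m <= t < tau m.+1)%N -> forall z b,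
           pol t z b = (b == sel m z)%:R)].

(* Realizability makes the conditional excess loss E_t[M_t(f)] the policy-weighted
   squared distance between f and f*, hence nonnegative.  On the event, the
   cumulative excess loss of every f in F over any window is therefore at least
   -C/2, while membership in \hat F_m(beta) caps it by (tau_m - 1) beta on
   [1, tau_m).  Comparing f with f* gives (1); feeding the cap back into the event
   gives (2), and for the algorithms the policy is constant on epoch m-1, so the
   sum over that epoch is T_{m-1} E_{tau_{m-1}}[M_{tau_{m-1}}(f)].  Splitting
   [1, tau_m) at tau_k gives (3), and (4) follows from (1) and (3) since
   beta_k exceeds the tolerance of (3) by (m - k - 1) C / (tau_k - 1) >= 0. *)
From HB Require Import structures.
From mathcomp Require Import all_boot all_order all_algebra ring lra zify.
From Stdlib Require Import FunctionalExtensionality.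
Set Implicit Arguments. Unset Strict Implicit. Unset Printing Implicit Defensive.
Import Order.TTheory GRing.Theory Num.Theory.
Local Open Scope ring_scope.

Lemma tau_gt0 (m : nat) : (0 < tau m)%N.
Proof. exact: expn_gt0. Qed.

Lemma leq_tau (k m : nat) : (k <= m)%N -> (tau k <= tau m)%N.
Proof. by move=> km; rewrite /tau leq_pexp2l //; lia. Qed.

Lemma tau_ge2 (m : nat) : (2 <= m)%N -> (2 <= tau m)%N.
Proof. by move=> m2; apply: leq_trans (leq_tau m2). Qed.

Lemma tauS (m : nat) : (1 <= m)%N -> tau m.+1 = (tau m + Tlen m)%N.
Proof. by case: m => // m _; rewrite /tau /Tlen /= expnS mul2n addnn. Qed.

Lemma expect_ge0 (T : Type) (R : realFieldType) (S : T -> Prop) (E : (T -> R) -> R)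
  (h : T -> R) :
  is_expect_on S E -> bounded_on S h -> (forall t, S t -> 0 <= h t) -> 0 <= E h.
Proof.
case=> _ Escale Emono _ hb h_ge0.
have bounded_one : bounded_on S (fun _ => 1 : R) by exists 1 => t _; rewrite normr1.
rewrite -(mul0r (E (fun _ => 1))) -Escale //.
by apply: Emono => // [|t St]; [exists 0 => t _; rewrite mul0r normr0 | rewrite mul0r h_ge0].
Qed.

Lemma expect_sqloss_excess (R : realFieldType) (K : nat) (E : (('I_K -> R) -> R) -> R)
  (b : 'I_K) (c : R) :
  is_expect_on (@unit_cube R K) E ->
  E (fun rr => (c - rr b) ^+ 2 - (E (fun rr => rr b) - rr b) ^+ 2)
    = (c - E (fun rr => rr b)) ^+ 2.
Proof.
case=> Eadd Escale _ Eone; set d := E (fun rr => rr b).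
have bounded_scale k (h : ('I_K -> R) -> R) :
    bounded_on (@unit_cube R K) h -> bounded_on (@unit_cube R K) (fun t => k * h t).
  by case=> B hB; exists (`|k| * B) => t Ht; rewrite normrM ler_wpM2l ?hB.
have bounded_one : bounded_on (@unit_cube R K) (fun _ => 1 : R) by exists 1 => t _; rewrite normr1.
have bounded_coord : bounded_on (@unit_cube R K) (fun rr => rr b).
  by exists 1 => t /(_ b) /andP[t0 t1]; rewrite ger0_norm.
have -> : (fun rr : 'I_K -> R => (c - rr b) ^+ 2 - (d - rr b) ^+ 2) =
    (fun rr => (c ^+ 2 - d ^+ 2) * 1 + 2 * (d - c) * rr b).
  by apply: functional_extensionality => rr; ring.
rewrite (Eadd _ _ (bounded_scale _ _ bounded_one) (bounded_scale _ _ bounded_coord)).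
by rewrite (Escale _ (fun _ => 1)) // (Escale _ (fun rr => rr b)) // Eone -/d; ring.
Qed.

Definition epochwise_constant (T : Type) (pol : nat -> T) : Prop :=
  forall m t, (1 <= m)%N -> (tau m <= t < tau m.+1)%N -> pol t = pol (tau m).

Lemma alg1_opt2_epochwise_constant (R : realFieldType) (X : Type) (K : nat)
  (F : (X -> 'I_K -> R) -> Prop) (x : nat -> X) (a : nat -> 'I_K) (r : nat -> 'I_K -> R)
  (betas : nat -> R) (pol : nat -> X -> 'I_K -> R) :
  alg1_opt2 F x a r betas pol -> epochwise_constant pol.
Proof.
case=> hi [lo [_ _ pol_def]] m t m1 t_epoch.
have tau_epoch : (tau m <= tau m < tau m.+1)%N by move: t_epoch; lia.
apply: functional_extensionality => z; apply: functional_extensionality => b.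
by rewrite (pol_def m t) // (pol_def m (tau m)).
Qed.

Lemma alg2_epochwise_constant (R : realFieldType) (X : Type) (K : nat)
  (F : (X -> 'I_K -> R) -> Prop) (x : nat -> X) (a : nat -> 'I_K) (r : nat -> 'I_K -> R)
  (betas : nat -> R) (pol : nat -> X -> 'I_K -> R) :
  alg2 F x a r betas pol -> epochwise_constant pol.
Proof.
case=> M0 [hi [sel [_ _ _ pol_warm pol_sel]]] m t m1 t_epoch.
have tau_epoch : (tau m <= tau m < tau m.+1)%N by move: t_epoch; lia.
apply: functional_extensionality => z; apply: functional_extensionality => b.
have [M0_le_m | m_lt_M0] := leqP M0 m.
  by rewrite (pol_sel m t) // (pol_sel m (tau m)).
have tau_warm := leq_tau m_lt_M0; have tau_m_gt0 := tau_gt0 m.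
by rewrite !pol_warm //; move: t_epoch; lia.
Qed.

Section ConditionalExcessLoss.

Variables (R : realFieldType) (X : Type) (K : nat).
Variables (EX : (X -> R) -> R) (ER : X -> (('I_K -> R) -> R) -> R).
Variables (pol : nat -> X -> 'I_K -> R) (fstar : X -> 'I_K -> R).

Hypothesis EX_expect : is_expect_on (fun _ : X => True) EX.
Hypothesis ER_expect : forall z, is_expect_on (@unit_cube R K) (ER z).
Hypothesis fstar_mean : forall z b, fstar z b = ER z (fun rr => rr b).
Hypothesis fstar_range : forall z b, 0 <= fstar z b <= 1.
Hypothesis pol_ge0 : forall t z b, 0 <= pol t z b.
Hypothesis pol_sum1 : forall t z, \sum_(b < K) pol t z b = 1.

Lemma Et_sq_dist (f : X -> 'I_K -> R) (t : nat) :
  Et EX ER pol fstar f t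
    = EX (fun z => \sum_(b < K) pol t z b * (f z b - fstar z b) ^+ 2).
Proof.
congr (EX _); apply: functional_extensionality => z; apply: eq_bigr => b _.
by rewrite /sqloss !fstar_mean expect_sqloss_excess.
Qed.

Lemma Et_ge0 (f : X -> 'I_K -> R) (t : nat) :
  (forall z b, 0 <= f z b <= 1) -> 0 <= Et EX ER pol fstar f t.
Proof.
move=> f_range; rewrite Et_sq_dist.
have sq_dist01 z b : 0 <= (f z b - fstar z b) ^+ 2 <= 1.
  move: (f_range z b) (fstar_range z b) => /andP[? ?] /andP[? ?].
  by rewrite sqr_ge0 /=; nra.
have summand_ge0 z b : 0 <= pol t z b * (f z b - fstar z b) ^+ 2.
  by rewrite mulr_ge0 //; case/andP: (sq_dist01 z b).
apply: expect_ge0 EX_expect _ (fun z _ => sumr_ge0 _ (fun b _ => summand_ge0 z b)).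
exists 1 => z _; rewrite ger0_norm ?sumr_ge0 // -(pol_sum1 t z).
apply: ler_sum => b _; rewrite ler_piMr //; by case/andP: (sq_dist01 z b).
Qed.

End ConditionalExcessLoss.

Section EpochAnalysis.

Variables (R : realFieldType) (X : Type) (K : nat).
Variables (F : (X -> 'I_K -> R) -> Prop) (fstar : X -> 'I_K -> R).
Variables (EX : (X -> R) -> R) (ER : X -> (('I_K -> R) -> R) -> R).
Variable pol : nat -> X -> 'I_K -> R.
Variables (x : nat -> X) (a : nat -> 'I_K) (r : nat -> 'I_K -> R).
Variables (T M : nat) (C : R).

Hypothesis F_fstar : F fstar.
Hypothesis Et_nonneg : forall f, F f -> forall t, 0 <= Et EX ER pol fstar f t.
Hypothesis C_ge0 : 0 <= C.
Hypothesis epoch_M : (tau M <= T)%N.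
Hypothesis event :
  forall f, F f -> forall t1 t2 : nat, (1 <= t1)%N -> (t1 <= t2)%N -> (t2 <= T)%N ->
    \sum_(t1 <= t < t2.+1) Et EX ER pol fstar f t
      <= 2 * \sum_(t1 <= t < t2.+1) Mt fstar x a r f t + C.

Definition cumM (lo hi : nat) (f : X -> 'I_K -> R) : R :=
  \sum_(lo <= t < hi) Mt fstar x a r f t.

Definition cumE (lo hi : nat) (f : X -> 'I_K -> R) : R :=
  \sum_(lo <= t < hi) Et EX ER pol fstar f t.

Lemma cumE_ge0 (lo hi : nat) (f : X -> 'I_K -> R) : F f -> 0 <= cumE lo hi f.
Proof. by move=> Ff; apply: sumr_ge0 => t _; exact: Et_nonneg. Qed.

Lemma cumE_le (lo hi : nat) (f : X -> 'I_K -> R) :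
  F f -> (1 <= lo)%N -> (hi <= T.+1)%N -> cumE lo hi f <= 2 * cumM lo hi f + C.
Proof.
move=> Ff lo1 hiT; case: (ltnP lo hi) => [lo_hi | hi_lo].
  by have := @event f Ff lo hi.-1 lo1; rewrite prednK; [apply; lia | lia].
by rewrite /cumE /cumM !big_geq // mulr0 add0r.
Qed.

Lemma cumM_lower (lo hi : nat) (f : X -> 'I_K -> R) :
  F f -> (1 <= lo)%N -> (hi <= T.+1)%N -> - C <= 2 * cumM lo hi f.
Proof.
by move=> Ff lo1 hiT; have := cumE_le Ff lo1 hiT; have := cumE_ge0 lo hi Ff; lra.
Qed.

Lemma Rhat_diff (m : nat) (f g : X -> 'I_K -> R) :
  Rhat x a r m f - Rhat x a r m g
    = ((tau m - 1)%:R)^-1 * (cumM 1 (tau m) f - cumM 1 (tau m) g).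
Proof.
rewrite /Rhat /cumM -mulrBr -!sumrB; congr (_ * _).
by apply: eq_bigr => s _; rewrite /Mt; ring.
Qed.

Lemma cumM_fstar (lo hi : nat) : cumM lo hi fstar = 0.
Proof. by apply: big1 => s _; rewrite /Mt subrr. Qed.

Lemma Fhat_le (m : nat) (beta beta' : R) (f : X -> 'I_K -> R) :
  beta <= beta' -> Fhat F x a r m beta f -> Fhat F x a r m beta' f.
Proof.
by move=> le_beta [Ff Hf]; split=> // m2 g Fg; exact: le_trans (Hf m2 g Fg) le_beta.
Qed.

Lemma Fhat_cumM_le (m : nat) (beta : R) (f : X -> 'I_K -> R) :
  (2 <= m)%N -> Fhat F x a r m beta f -> cumM 1 (tau m) f <= (tau m - 1)%:R * beta.
Proof.
move=> m2 [_ Hf]; have := Hf m2 fstar F_fstar.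
have n_gt0 : 0 < (tau m - 1)%:R :> R by rewrite ltr0n; have := tau_ge2 m2; lia.
by rewrite Rhat_diff cumM_fstar subr0 -(ler_pM2l n_gt0) mulrA divff ?mul1r ?gt_eqF.
Qed.

Lemma tau_le_horizon (m : nat) : (m <= M)%N -> (tau m <= T.+1)%N.
Proof. by move=> mM; have := leq_tau mM; lia. Qed.

Lemma Fhat_fstar (m : nat) :
  (m <= M)%N -> Fhat F x a r m (C / (2 * (tau m - 1)%:R)) fstar.
Proof.
move=> mM; split=> // m2 g Fg; rewrite Rhat_diff cumM_fstar sub0r.
have -> : C / (2 * (tau m - 1)%:R) = ((tau m - 1)%:R)^-1 * (C / 2) by rewrite invfM; ring.
apply: ler_wpM2l; first by rewrite invr_ge0 ler0n.
by have := cumM_lower Fg (leqnn 1) (tau_le_horizon mM); lra.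
Qed.

Lemma Fhat_cumE_le (m : nat) (beta : R) (f : X -> 'I_K -> R) :
  (2 <= m)%N -> (m <= M)%N -> Fhat F x a r m beta f ->
  cumE 1 (tau m) f <= 2 * ((tau m - 1)%:R * beta) + C.
Proof.
move=> m2 mM Hf; have := cumE_le Hf.1 (leqnn 1) (tau_le_horizon mM).
by have := Fhat_cumM_le m2 Hf; lra.
Qed.

Lemma Fhat_sub_Ftilde (m : nat) (beta : R) (f : X -> 'I_K -> R) :
  (2 <= m)%N -> (m <= M)%N -> Fhat F x a r m beta f ->
  Ftilde F EX ER pol fstar m (2 * beta + C / (tau m - 1)%:R) f.
Proof.
move=> m2 mM Hf; split; first exact: Hf.1.
have n_gt0 : 0 < (tau m - 1)%:R :> R by rewrite ltr0n; have := tau_ge2 m2; lia.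
have -> : 2 * beta + C / (tau m - 1)%:R
    = ((tau m - 1)%:R)^-1 * (2 * ((tau m - 1)%:R * beta) + C).
  by field; rewrite gt_eqF.
by apply: ler_wpM2l; [rewrite invr_ge0 ltW | exact: Fhat_cumE_le].
Qed.

Lemma Fhat_Et_last_epoch (m : nat) (beta : R) (f : X -> 'I_K -> R) :
  (2 <= m)%N -> (m <= M)%N ->
  epochwise_constant pol ->
  Fhat F x a r m beta f ->
  Et EX ER pol fstar f (tau m.-1) <= (2 * beta * (tau m - 1)%:R + C) / (Tlen m.-1)%:R.
Proof.
move=> m2 mM pol_const Hf.
have tau_m : tau m = (tau m.-1 + Tlen m.-1)%N by rewrite -tauS ?prednK //; lia.
have pol_epoch t : (tau m.-1 <= t < tau m)%N -> pol t = pol (tau m.-1).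
  by move=> t_epoch; apply: pol_const; rewrite ?prednK //; lia.
have cumE_epoch : cumE (tau m.-1) (tau m) f = (Tlen m.-1)%:R * Et EX ER pol fstar f (tau m.-1).
  rewrite /cumE (eq_big_nat _ _ (F2 := fun=> Et EX ER pol fstar f (tau m.-1))).
    by rewrite sumr_const_nat tau_m addKn mulr_natl.
  by move=> t /pol_epoch pol_t; rewrite /Et pol_t.
have cumE_split : cumE 1 (tau m) f = cumE 1 (tau m.-1) f + cumE (tau m.-1) (tau m) f.
  by rewrite /cumE (big_cat_nat _ (n := tau m.-1)) ?tau_gt0 // tau_m leq_addr.
rewrite ler_pdivlMr ?ltr0n ?expn_gt0 // mulrC -cumE_epoch.
have := Fhat_cumE_le m2 mM Hf; have := cumE_ge0 1 (tau m.-1) Hf.1; lra.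
Qed.

Lemma Fhat_shrink (k m : nat) (beta : R) (f : X -> 'I_K -> R) :
  (k <= m)%N -> (m <= M)%N -> Fhat F x a r m beta f ->
  Fhat F x a r k ((tau m - 1)%:R / (tau k - 1)%:R * beta + C / (tau k - 1)%:R) f.
Proof.
move=> km mM Hf; split=> [|k2 g Fg]; first exact: Hf.1.
have -> : (tau m - 1)%:R / (tau k - 1)%:R * beta + C / (tau k - 1)%:R
    = ((tau k - 1)%:R)^-1 * ((tau m - 1)%:R * beta + C) by ring.
rewrite Rhat_diff; apply: ler_wpM2l; first by rewrite invr_ge0 ler0n.
have cap_f := Fhat_cumM_le (leq_trans k2 km) Hf.
rewrite /cumM (big_cat_nat _ (n := tau k)) ?tau_gt0 ?leq_tau //= -!/(cumM _ _ f) in cap_f.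
have := cumM_lower Hf.1 (tau_gt0 k) (tau_le_horizon mM).
have := cumM_lower Fg (leqnn 1) (tau_le_horizon (leq_trans km mM)).
lra.
Qed.

Lemma Fhat_fstar_tolerance (m : nat) :
  (m <= M)%N -> Fhat F x a r m ((M - m + 1)%:R * C / (tau m - 1)%:R) fstar.
Proof.
move=> mM; apply: Fhat_le (Fhat_fstar mM).
have half_le : C / 2 <= (M - m + 1)%:R * C.
  have : 1 <= (M - m + 1)%:R :> R by rewrite ler1n addn1.
  by have := C_ge0; nra.
have -> : C / (2 * (tau m - 1)%:R) = ((tau m - 1)%:R)^-1 * (C / 2) by rewrite invfM; ring.
have -> : (M - m + 1)%:R * C / (tau m - 1)%:R = ((tau m - 1)%:R)^-1 * ((M - m + 1)%:R * C)
  by ring.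
by apply: ler_wpM2l half_le; rewrite invr_ge0 ler0n.
Qed.

Lemma Fhat_tolerance_nested (k m : nat) (f : X -> 'I_K -> R) :
  (k <= m)%N -> (m <= M)%N ->
  Fhat F x a r m ((M - m + 1)%:R * C / (tau m - 1)%:R) f ->
  Fhat F x a r k ((M - k + 1)%:R * C / (tau k - 1)%:R) f.
Proof.
move=> km mM Hf; have [k_lt2 | k2] := ltnP k 2; first by split=> [|?]; [exact: Hf.1 | lia].
have [k_lt_m | m_le_k] := ltnP k m; last by have -> : k = m by lia.
apply: Fhat_le (Fhat_shrink (ltnW k_lt_m) mM Hf).
have nm_neq0 : (tau m - 1)%:R != 0 :> R.
  by rewrite pnatr_eq0 -lt0n; have := tau_ge2 (leq_trans k2 (ltnW k_lt_m)); lia.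
have sum_le : (M - m + 1)%:R * C + C <= (M - k + 1)%:R * C.
  have : (M - m + 1)%:R + 1 <= (M - k + 1)%:R :> R by rewrite natr1 ler_nat; lia.
  by have := C_ge0; nra.
set u := ((tau k - 1)%:R)^-1.
have -> : (tau m - 1)%:R * u * ((M - m + 1)%:R * C / (tau m - 1)%:R) + C * u
    = u * ((M - m + 1)%:R * C + C) by field.
by rewrite [_ * u]mulrC; apply: ler_wpM2l sum_le; rewrite invr_ge0 ler0n.
Qed.

End EpochAnalysis.

Theorem mainTheorem15 (R : realFieldType) (X : Type) (K : nat)
  (F : (X -> 'I_K -> R) -> Prop) (fstar : X -> 'I_K -> R)
  (EX : (X -> R) -> R) (ER : X -> (('I_K -> R) -> R) -> R)
  (pol : nat -> X -> 'I_K -> R)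
  (x : nat -> X) (a : nat -> 'I_K) (r : nat -> 'I_K -> R)
  (T M : nat) (C : R) :
  (0 < K)%N ->
  (* the distribution D of (x, r): context marginal EX, conditional reward law ER z *)
  is_expect_on (fun _ : X => True) EX ->
  (forall z, is_expect_on (@unit_cube R K) (ER z)) ->
  (* F is a class of functions X x A -> [0,1] *)
  (forall f, F f -> forall z b, 0 <= f z b <= 1) ->
  (* realizability *)
  F fstar -> (forall z b, fstar z b = ER z (fun rr => rr b)) ->
  (* pol t z is the conditional law of a_t given the history and x_t = z *)
  (forall t z b, 0 <= pol t z b) -> (forall t z, \sum_(b < K) pol t z b = 1) ->
  (forall t, unit_cube (r t)) ->
  (* M is the epoch containing T *)
  (1 <= T)%N -> (1 <= M)%N -> (tau M <= T < tau M.+1)%N ->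
  0 < C ->
  (* the event *)
  (forall f, F f -> forall t1 t2 : nat, (1 <= t1)%N -> (t1 <= t2)%N -> (t2 <= T)%N ->
     \sum_(t1 <= t < t2.+1) Et EX ER pol fstar f t
       <= 2 * \sum_(t1 <= t < t2.+1) Mt fstar x a r f t + C) ->
  (forall k m : nat, (2 <= k)%N -> (k <= m)%N -> (m <= M)%N ->
     [/\ (* (1) *)
         Fhat F x a r m (C / (2 * (tau m - 1)%:R)) fstar,
         (* (2) *)
         (forall beta, 0 <= beta ->
            (forall f, Fhat F x a r m beta f ->
               Ftilde F EX ER pol fstar m (2 * beta + C / (tau m - 1)%:R) f) /\
            (((exists betas, alg1_opt2 F x a r betas pol) \/
              (exists betas, alg2 F x a r betas pol)) ->
             forall f, Fhat F x a r m beta f ->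
               Et EX ER pol fstar f (tau m.-1)
                 <= (2 * beta * (tau m - 1)%:R + C) / (Tlen m.-1)%:R))
       & (* (3) *)
         (forall beta, 0 <= beta -> forall f, Fhat F x a r m beta f ->
            Fhat F x a r k ((tau m - 1)%:R / (tau k - 1)%:R * beta + C / (tau k - 1)%:R) f)])
  /\
  (* (4) with beta_m = (M - m + 1) C / (tau_m - 1), F_m = \hat F_m(beta_m), F_1 = F *)
  ((forall m : nat, (1 <= m)%N -> (m <= M)%N ->
      Fhat F x a r m ((M - m + 1)%:R * C / (tau m - 1)%:R) fstar) /\
   (forall k m : nat, (1 <= k)%N -> (k <= m)%N -> (m <= M)%N -> forall f,
      Fhat F x a r m ((M - m + 1)%:R * C / (tau m - 1)%:R) f ->
      Fhat F x a r k ((M - k + 1)%:R * C / (tau k - 1)%:R) f)).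
Proof.
move=> _ EX_e ER_e F_range F_fstar fstar_mean pol_ge0 pol_sum1 _ _ _ /andP[tau_M _] C_gt0 event.
have Et_nonneg f : F f -> forall t, 0 <= Et EX ER pol fstar f t.
  by move=> Ff t; apply: Et_ge0 => //; exact: F_range.
have C_ge0 := ltW C_gt0.
split=> [k m k2 km mM | ].
  have m2 := leq_trans k2 km.
  split=> [| beta _ | beta _ f].
  - exact (Fhat_fstar F_fstar Et_nonneg C_ge0 tau_M event mM).
  - split=> [f | alg f]; first exact (Fhat_sub_Ftilde F_fstar C_ge0 tau_M event m2 mM).
    have pol_const : epochwise_constant pol.
      case: alg => -[betas].
        exact: alg1_opt2_epochwise_constant.
      exact: alg2_epochwise_constant.
    exact (Fhat_Et_last_epoch F_fstar Et_nonneg C_ge0 tau_M event m2 mM pol_const).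
  - exact (Fhat_shrink F_fstar Et_nonneg C_ge0 tau_M event km mM).
split=> [m _ mM | k m _ km mM f].
  exact (Fhat_fstar_tolerance F_fstar Et_nonneg C_ge0 tau_M event mM).
exact (Fhat_tolerance_nested F_fstar Et_nonneg C_ge0 tau_M event km mM).
Qed.
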